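(* Let $\lambda_0,\lambda\in\{-1,0,1\}$ and let $U:\mathbb{H}^1_{\lambda_0}\to\mathbb{H}^1_\lambda$, $$U=\frac{1}{\sqrt{|F_1|^2-\lambda|F_2|^2}}\begin{pmatrix}F_1&\lambda\bar F_2\\ F_2&\bar F_1\end{pmatrix},\qquad |F_1|^2>\lambda|F_2|^2,$$ be a bundle map covering a holomorphic map $f:M_0\to M$ (so $\pi_\lambda\circ U=f\circ\pi_{\lambda_0}$), and let $\mathcal{A}=U^{-1}dU$. Let $s$ be the section $s(z)=\frac{1}{\sqrt{1-\lambda_0|z|^2}}\begin{pmatrix}1&\lambda_0\bar z\\ z&1\end{pmatrix}$ of $\pi_{\lambda_0}$, let $f_1=F_1\circ s$, and for $z$ not a zero of $f_1$ let $r_{f_1}(z)=\begin{pmatrix}\bar f_1/|f_1|&0\\0&f_1/|f_1|\end{pmatrix}\in\mathbb{H}^1_\lambda$. Let $\hat A=-\Gamma t_0+\frac i2(e\,t_--\bar e\,t_+)$ be the connection on $M$ built from $e=\frac{2dz}{1-\lambda|z|^2}$ and $\Gamma=-i\lambda\frac{z\,d\bar z-\bar z\,dz}{1-\lambda|z|^2}$. Then, away from the zeros of $f_1$ (where $r_{f_1}$ is possibly singular), $$f^*\hat A=r_{f_1}^{-1}\,(s^*\mathcal{A})\,r_{f_1}+r_{f_1}^{-1}dr_{f_1}.$$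
   Context: For $\mu\in\{-1,0,1\}$, $\mathbb{H}^1_\mu=\left\{\begin{pmatrix} z_1&\mu\bar z_2\\ z_2&\bar z_1\end{pmatrix}: |z_1|^2-\mu|z_2|^2=1\right\}$, with projection $\pi_\mu(h)=z_2/z_1$ onto the constant-curvature surface $M_\mu$ (Riemann sphere, $\mathbb{C}$, or unit disc for $\mu=-1,0,1$, metric $4dzd\bar z/(1-\mu|z|^2)^2$); $M_0=M_{\lambda_0}$, $M=M_\lambda$. The Lie algebra of $\mathbb{H}^1_\lambda$ has basis $t_0=-\frac{i}{2}\begin{pmatrix}1&0\\0&-1\end{pmatrix}$, $t_1=-\frac{i}{2}\begin{pmatrix}0&-\lambda\\1&0\end{pmatrix}$, $t_2=\frac12\begin{pmatrix}0&\lambda\\1&0\end{pmatrix}$, $t_\pm=t_1\pm it_2$. A bundle map sends fibres of $\pi_{\lambda_0}$ into fibres of $\pi_\lambda$. The section $s$ is defined where $1-\lambda_0|z|^2>0$ (only locally, on $\mathbb{C}$, when $\lambda_0=-1$). *)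

From Stdlib Require Import Reals.
From Coquelicot Require Import Coquelicot.
Open Scope R_scope.

Local Open Scope C_scope.

Record mat2 := Mat2 { a11 : C; a12 : C; a21 : C; a22 : C }.

Definition madd (A B : mat2) : mat2 :=
  Mat2 (a11 A + a11 B) (a12 A + a12 B) (a21 A + a21 B) (a22 A + a22 B).
Definition mscal (c : C) (A : mat2) : mat2 :=
  Mat2 (c * a11 A) (c * a12 A) (c * a21 A) (c * a22 A).
Definition mmul (A B : mat2) : mat2 :=
  Mat2 (a11 A * a11 B + a12 A * a21 B) (a11 A * a12 B + a12 A * a22 B)
       (a21 A * a11 B + a22 A * a21 B) (a21 A * a12 B + a22 A * a22 B).
Definition mdet (A : mat2) : C := a11 A * a22 A - a12 A * a21 A.
Definition minv (A : mat2) : mat2 :=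
  mscal (/ mdet A) (Mat2 (a22 A) (- a12 A) (- a21 A) (a11 A)).

Definition inH (mu : R) (h : mat2) : Prop :=
  a12 h = RtoC mu * Cconj (a21 h) /\ a22 h = Cconj (a11 h) /\
  (Cmod (a11 h))^2 - mu * (Cmod (a21 h))^2 = 1.

(** projection pi_mu(h) = z2 / z1 (affine chart) *)
Definition proj (h : mat2) : C := a21 h / a11 h.

Definition inD (lam0 : R) (z : C) : Prop := 1 - lam0 * (Cmod z)^2 > 0.

Definition sec (lam0 : R) (z : C) : mat2 :=
  mscal (RtoC (/ sqrt (1 - lam0 * (Cmod z)^2)))
        (Mat2 1 (RtoC lam0 * Cconj z) z 1).

Definition Umap (lam : R) (F1 F2 : mat2 -> C) (h : mat2) : mat2 :=
  mscal (RtoC (/ sqrt ((Cmod (F1 h))^2 - lam * (Cmod (F2 h))^2)))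
        (Mat2 (F1 h) (RtoC lam * Cconj (F2 h)) (F2 h) (Cconj (F1 h))).

Definition t0 : mat2 := mscal (- Ci / 2) (Mat2 1 0 0 (-1)).
Definition t1 (lam : R) : mat2 := mscal (- Ci / 2) (Mat2 0 (- RtoC lam) 1 0).
Definition t2 (lam : R) : mat2 := mscal (/ 2) (Mat2 0 (RtoC lam) 1 0).
Definition tp (lam : R) : mat2 := madd (t1 lam) (mscal Ci (t2 lam)).
Definition tm (lam : R) : mat2 := madd (t1 lam) (mscal (- Ci) (t2 lam)).

Definition pdx (g : C -> C) (z : C) : C :=
  (Derive (fun t => fst (g ((fst z + t)%R, snd z))) 0,
   Derive (fun t => snd (g ((fst z + t)%R, snd z))) 0).
Definition pdy (g : C -> C) (z : C) : C :=
  (Derive (fun t => fst (g (fst z, (snd z + t)%R))) 0,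
   Derive (fun t => snd (g (fst z, (snd z + t)%R))) 0).
Definition mpdx (g : C -> mat2) (z : C) : mat2 :=
  Mat2 (pdx (fun w => a11 (g w)) z) (pdx (fun w => a12 (g w)) z)
       (pdx (fun w => a21 (g w)) z) (pdx (fun w => a22 (g w)) z).
Definition mpdy (g : C -> mat2) (z : C) : mat2 :=
  Mat2 (pdy (fun w => a11 (g w)) z) (pdy (fun w => a12 (g w)) z)
       (pdy (fun w => a21 (g w)) z) (pdy (fun w => a22 (g w)) z).

Definition real_diff (g : C -> C) (z : C) : Prop :=
  differentiable_pt (fun x y => fst (g (x, y))) (fst z) (snd z) /\
  differentiable_pt (fun x y => snd (g (x, y))) (fst z) (snd z).

Definition holo_at (f : C -> C) (z : C) : Prop :=
  ex_derive (K := C_AbsRing) (V := C_NormedModule) f z.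

(** 1-forms on an open subset of C = R^2, written in coordinates:
    omega = cx dx + cy dy.  Scalar (C-valued) and matrix-valued forms. *)
Record cform := CForm { cx : C -> C; cy : C -> C }.
Record mform := MForm { fx : C -> mat2; fy : C -> mat2 }.

Definition dz : cform := CForm (fun _ => 1) (fun _ => Ci).
Definition dzbar : cform := CForm (fun _ => 1) (fun _ => - Ci).
Definition cf_scal (g : C -> C) (w : cform) : cform :=
  CForm (fun z => g z * cx w z) (fun z => g z * cy w z).
Definition cf_add (w1 w2 : cform) : cform :=
  CForm (fun z => cx w1 z + cx w2 z) (fun z => cy w1 z + cy w2 z).
Definition cf_conj (w : cform) : cform :=
  CForm (fun z => Cconj (cx w z)) (fun z => Cconj (cy w z)).
Definition cf_tens (w : cform) (T : mat2) : mform :=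
  MForm (fun z => mscal (cx w z) T) (fun z => mscal (cy w z) T).
Definition mf_add (w1 w2 : mform) : mform :=
  MForm (fun z => madd (fx w1 z) (fx w2 z)) (fun z => madd (fy w1 z) (fy w2 z)).
Definition mf_scal (c : C) (w : mform) : mform :=
  MForm (fun z => mscal c (fx w z)) (fun z => mscal c (fy w z)).

Definition e_form (lam : R) : cform :=
  cf_scal (fun z => RtoC (2 / (1 - lam * (Cmod z)^2))) dz.
Definition Gamma_form (lam : R) : cform :=
  cf_scal (fun z => - Ci * RtoC lam / RtoC (1 - lam * (Cmod z)^2))
    (cf_add (cf_scal (fun z => z) dzbar) (cf_scal (fun z => - Cconj z) dz)).
Definition Ahat (lam : R) : mform :=
  mf_add (mf_scal (-1) (cf_tens (Gamma_form lam) t0))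
         (mf_scal (Ci / 2)
            (mf_add (cf_tens (e_form lam) (tm lam))
                    (mf_scal (-1) (cf_tens (cf_conj (e_form lam)) (tp lam))))).

Definition pullback (f : C -> C) (w : mform) : mform :=
  MForm (fun z => madd (mscal (RtoC (fst (pdx f z))) (fx w (f z)))
                       (mscal (RtoC (snd (pdx f z))) (fy w (f z))))
        (fun z => madd (mscal (RtoC (fst (pdy f z))) (fx w (f z)))
                       (mscal (RtoC (snd (pdy f z))) (fy w (f z)))).

Definition MC (g : C -> mat2) : mform :=
  MForm (fun z => mmul (minv (g z)) (mpdx g z))
        (fun z => mmul (minv (g z)) (mpdy g z)).

(** s^* A where A = U^{-1} dU, i.e. (U o s)^{-1} d(U o s) *)
Definition sA (lam0 lam : R) (F1 F2 : mat2 -> C) : mform :=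
  MC (fun z => Umap lam F1 F2 (sec lam0 z)).

Definition rmat (f1 : C -> C) (z : C) : mat2 :=
  Mat2 (Cconj (f1 z) / RtoC (Cmod (f1 z))) 0 0 (f1 z / RtoC (Cmod (f1 z))).

Definition gauge (r : C -> mat2) (w : mform) : mform :=
  MForm (fun z => madd (mmul (mmul (minv (r z)) (fx w z)) (r z))
                       (mmul (minv (r z)) (mpdx r z)))
        (fun z => madd (mmul (mmul (minv (r z)) (fy w z)) (r z))
                       (mmul (minv (r z)) (mpdy r z))).

From Stdlib Require Import Reals Lra FunctionalExtensionality.
From Coquelicot Require Import Coquelicot.
Open Scope R_scope.

(* Write h = F1 o s and k = F2 o s.  Near a point where h <> 0, the covering
   condition forces f = k / h, and the bundle map factors through the section
   s_lam of pi_lam:  U o s = s_lam(f) . r^{-1}  with  r = diag(conj h/|h|, h/|h|).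
   The Maurer-Cartan form is gauge covariant, so
   r^{-1} (U o s)^{-1} d(U o s) r + r^{-1} dr = s_lam(f)^{-1} d(s_lam(f)),
   and a direct computation shows that s_lam^{-1} ds_lam is exactly Ahat.
   Both sides are compared along the two coordinate lines through z, so the
   holomorphy of f and the restriction lam0, lam in {-1, 0, 1} are not needed. *)

(* Complex-valued curves are differentiated at [t = 0] only.  By conversion,
   [pdx g z] is [CDerive0 (fun t => g (fst z + t, snd z))], and similarly for
   [pdy], [mpdx], [mpdy] and [MDerive0]. *)
Definition CDerive0 (h : R -> C) : C :=
  (Derive (fun t => fst (h t)) 0, Derive (fun t => snd (h t)) 0).
Definition ex_CDerive0 (h : R -> C) : Prop :=
  ex_derive (fun t => fst (h t)) 0 /\ ex_derive (fun t => snd (h t)) 0.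

(* Splitting a curve into real components that [auto_derive] sees as variables. *)
Lemma curve_ind (P : (R -> C) -> Prop) :
  (forall a b : R -> R, P (fun t => (a t, b t))) -> forall h, P h.
Proof.
  intros HP h.
  replace h with (fun t => (fst (h t), snd (h t))); [apply HP|].
  apply functional_extensionality; intros t; destruct (h t); reflexivity.
Qed.

Lemma RtoC_neq_0 (x : R) : x <> 0 -> RtoC x <> 0%C.
Proof. intros Hx E; apply Hx, RtoC_inj, E. Qed.

Section CurveCalculus.
Local Open Scope C_scope.
Implicit Types (h k : R -> C) (u : R -> R).

Lemma ex_CDerive0_ext_loc h k :
  locally 0 (fun t => h t = k t) -> ex_CDerive0 h -> ex_CDerive0 k.
Proof.
  intros Hhk [H1 H2]; split;
    [refine (ex_derive_ext_loc _ _ _ _ H1) | refine (ex_derive_ext_loc _ _ _ _ H2)];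
    apply (filter_imp _ _ (fun t Ht => f_equal _ Ht) Hhk).
Qed.

Lemma CDerive0_ext_loc h k :
  locally 0 (fun t => h t = k t) -> CDerive0 h = CDerive0 k.
Proof.
  intros Hhk; unfold CDerive0; f_equal; apply Derive_ext_loc;
    apply (filter_imp _ _ (fun t Ht => f_equal _ Ht) Hhk).
Qed.

Lemma ex_CDerive0_const (c : C) : ex_CDerive0 (fun _ => c).
Proof. split; apply ex_derive_const. Qed.

Lemma CDerive0_const (c : C) : CDerive0 (fun _ => c) = 0.
Proof. unfold CDerive0; rewrite !Derive_const; reflexivity. Qed.

Lemma ex_CDerive0_RtoC u : ex_derive u 0 -> ex_CDerive0 (fun t => RtoC (u t)).
Proof. split; simpl; [assumption | apply ex_derive_const]. Qed.

Lemma CDerive0_RtoC u : CDerive0 (fun t => RtoC (u t)) = RtoC (Derive u 0).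
Proof. unfold CDerive0; simpl; rewrite Derive_const; reflexivity. Qed.

Lemma ex_CDerive0_minus h k :
  ex_CDerive0 h -> ex_CDerive0 k -> ex_CDerive0 (fun t => h t - k t).
Proof.
  revert k; induction h using curve_ind; induction k using curve_ind.
  intros [? ?] [? ?]; split; simpl; auto_derive; auto.
Qed.

Lemma CDerive0_minus h k : ex_CDerive0 h -> ex_CDerive0 k ->
  CDerive0 (fun t => h t - k t) = CDerive0 h - CDerive0 k.
Proof.
  revert k; induction h using curve_ind; induction k using curve_ind.
  intros [? ?] [? ?]; apply injective_projections; simpl;
    apply is_derive_unique; auto_derive; auto; ring.
Qed.

Lemma CDerive0_plus h k : ex_CDerive0 h -> ex_CDerive0 k ->
  CDerive0 (fun t => h t + k t) = CDerive0 h + CDerive0 k.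
Proof.
  revert k; induction h using curve_ind; induction k using curve_ind.
  intros [? ?] [? ?]; apply injective_projections; simpl;
    apply is_derive_unique; auto_derive; auto; ring.
Qed.

Lemma ex_CDerive0_mult h k :
  ex_CDerive0 h -> ex_CDerive0 k -> ex_CDerive0 (fun t => h t * k t).
Proof.
  revert k; induction h using curve_ind; induction k using curve_ind.
  intros [? ?] [? ?]; split; simpl; auto_derive; auto.
Qed.

Lemma CDerive0_mult h k : ex_CDerive0 h -> ex_CDerive0 k ->
  CDerive0 (fun t => h t * k t) = CDerive0 h * k 0 + h 0 * CDerive0 k.
Proof.
  revert k; induction h using curve_ind; induction k using curve_ind.
  intros [? ?] [? ?]; apply injective_projections; simpl;
    apply is_derive_unique; auto_derive; auto; ring.
Qed.

Lemma ex_CDerive0_conj h : ex_CDerive0 h -> ex_CDerive0 (fun t => Cconj (h t)).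
Proof.
  induction h using curve_ind.
  intros [? ?]; split; simpl; auto_derive; auto.
Qed.

Lemma CDerive0_conj h : ex_CDerive0 h ->
  CDerive0 (fun t => Cconj (h t)) = Cconj (CDerive0 h).
Proof.
  induction h using curve_ind.
  intros [? ?]; apply injective_projections; simpl; [reflexivity|].
  apply is_derive_unique; auto_derive; auto; ring.
Qed.

Lemma ex_CDerive0_inv h : ex_CDerive0 h -> h 0 <> 0 -> ex_CDerive0 (fun t => / h t).
Proof.
  induction h using curve_ind; intros [? ?] Hn.
  assert (Hq : (0 < a 0 ^ 2 + b 0 ^ 2)%R).
  { replace (a 0 ^ 2 + b 0 ^ 2)%R with (Cmod (a 0, b 0) ^ 2)%R by apply Cmod2_alt.
    apply pow_lt, Cmod_gt_0, Hn. }
  split; simpl; auto_derive; repeat split; auto; lra.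
Qed.

Lemma ex_CDerive0_Cmod2 h :
  ex_CDerive0 h -> ex_CDerive0 (fun t => RtoC (Cmod (h t) ^ 2)).
Proof.
  intros Hh; apply (ex_CDerive0_ext_loc (fun t => h t * Cconj (h t))).
  - apply filter_forall; intros t; symmetry; apply Cmod2_conj.
  - apply ex_CDerive0_mult, ex_CDerive0_conj; assumption.
Qed.

Lemma CDerive0_Cmod2 h : ex_CDerive0 h ->
  CDerive0 (fun t => RtoC (Cmod (h t) ^ 2)) =
  CDerive0 h * Cconj (h 0) + h 0 * Cconj (CDerive0 h).
Proof.
  intros Hh; rewrite (CDerive0_ext_loc _ (fun t => h t * Cconj (h t))).
  - rewrite CDerive0_mult, CDerive0_conj; auto using ex_CDerive0_conj.
  - apply filter_forall; intros t; apply Cmod2_conj.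
Qed.

Lemma ex_derive_of_RtoC u : ex_CDerive0 (fun t => RtoC (u t)) -> ex_derive u 0.
Proof. intros [Hu _]; exact Hu. Qed.

Lemma ex_CDerive0_RtoC_Cmod h :
  ex_CDerive0 h -> h 0 <> 0 -> ex_CDerive0 (fun t => RtoC (Cmod (h t))).
Proof.
  intros Hh Hh0; apply ex_CDerive0_RtoC.
  apply (ex_derive_ext (fun t => sqrt (Cmod (h t) ^ 2))).
  { intros t; apply sqrt_pow2, Cmod_ge_0. }
  pose (u := fun t => (Cmod (h t) ^ 2)%R); change (ex_derive (fun t => sqrt (u t)) 0).
  auto_derive; repeat split.
  - exact (ex_derive_of_RtoC u (ex_CDerive0_Cmod2 h Hh)).
  - apply pow_lt, Cmod_gt_0, Hh0.
Qed.

Lemma ex_CDerive0_RtoC_invsqrt u : ex_derive u 0 -> (0 < u 0)%R ->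
  ex_CDerive0 (fun t => RtoC (/ sqrt (u t))).
Proof.
  intros Hu Hu0; apply ex_CDerive0_RtoC; auto_derive.
  repeat split; auto; apply Rgt_not_eq, sqrt_lt_R0, Hu0.
Qed.

Lemma CDerive0_RtoC_invsqrt u : ex_derive u 0 -> (0 < u 0)%R ->
  CDerive0 (fun t => RtoC (/ sqrt (u t))) =
  - RtoC (/ sqrt (u 0)) * CDerive0 (fun t => RtoC (u t)) / (2 * RtoC (u 0)).
Proof.
  intros Hu Hu0; rewrite !CDerive0_RtoC.
  assert (Hs : (0 < sqrt (u 0))%R) by (apply sqrt_lt_R0; exact Hu0).
  replace (Derive (fun t => / sqrt (u t))%R 0)
    with (- Derive u 0 / (2 * u 0 * sqrt (u 0)))%R.
  - apply injective_projections; simpl; field; lra.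
  - symmetry; apply is_derive_unique; auto_derive; [repeat split; auto; lra|].
    change (Derive (fun x => u x) 0) with (Derive u 0).
    rewrite sqrt_sqrt by lra; field; split; lra.
Qed.

Lemma ex_CDerive0_RtoC_sub_Cmod2 (c : R -> R) (lam : R) k :
  ex_CDerive0 (fun t => RtoC (c t)) -> ex_CDerive0 k ->
  ex_CDerive0 (fun t => RtoC (c t - lam * Cmod (k t) ^ 2)).
Proof.
  intros Hc Hk.
  apply (ex_CDerive0_ext_loc (fun t => RtoC (c t) - RtoC lam * RtoC (Cmod (k t) ^ 2))).
  - apply filter_forall; intros t; rewrite RtoC_minus, RtoC_mult; reflexivity.
  - apply ex_CDerive0_minus, ex_CDerive0_mult, ex_CDerive0_Cmod2;
      auto using ex_CDerive0_const.
Qed.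

Lemma CDerive0_RtoC_sub_Cmod2 (c : R -> R) (lam : R) k :
  ex_CDerive0 (fun t => RtoC (c t)) -> ex_CDerive0 k ->
  CDerive0 (fun t => RtoC (c t - lam * Cmod (k t) ^ 2)) =
  CDerive0 (fun t => RtoC (c t)) -
  RtoC lam * (CDerive0 k * Cconj (k 0) + k 0 * Cconj (CDerive0 k)).
Proof.
  intros Hc Hk.
  rewrite (CDerive0_ext_loc _ (fun t => RtoC (c t) - RtoC lam * RtoC (Cmod (k t) ^ 2))).
  - rewrite CDerive0_minus, CDerive0_mult, CDerive0_const, CDerive0_Cmod2;
      auto using ex_CDerive0_const, ex_CDerive0_mult, ex_CDerive0_Cmod2.
    ring.
  - apply filter_forall; intros t; rewrite RtoC_minus, RtoC_mult; reflexivity.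
Qed.

End CurveCalculus.

Lemma ex_derive_locally_pos (u : R -> R) :
  ex_derive u 0 -> 0 < u 0 -> locally 0 (fun t => 0 < u t).
Proof.
  intros Hu Hu0; apply (ex_derive_continuous u 0 Hu (fun y => 0 < y)), open_gt, Hu0.
Qed.

Lemma ex_derive_comp_2d (G : R -> R -> R) (u v : R -> R) :
  differentiable_pt G (u 0) (v 0) -> ex_derive u 0 -> ex_derive v 0 ->
  ex_derive (fun t => G (u t) (v t)) 0.
Proof.
  intros (lx & ly & HG) [du Hu] [dv Hv]; exists (lx * du + ly * dv).
  apply is_derive_Reals, derivable_pt_lim_comp_2d; [exact HG | |];
    apply is_derive_Reals; assumption.
Qed.

Lemma ex_CDerive0_comp (g : C -> C) (p : R -> C) :
  ex_CDerive0 p -> real_diff g (p 0) -> ex_CDerive0 (fun t => g (p t)).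
Proof.
  intros [Hp1 Hp2] [Hg1 Hg2].
  split; [apply (ex_derive_ext (fun t => fst (g (fst (p t), snd (p t)))))
         |apply (ex_derive_ext (fun t => snd (g (fst (p t), snd (p t)))))];
    try (intros t; rewrite <- surjective_pairing; reflexivity);
    apply (ex_derive_comp_2d (fun x y => _ (g (x, y)))); assumption.
Qed.

Definition MDerive0 (G : R -> mat2) : mat2 :=
  Mat2 (CDerive0 (fun t => a11 (G t))) (CDerive0 (fun t => a12 (G t)))
       (CDerive0 (fun t => a21 (G t))) (CDerive0 (fun t => a22 (G t))).
Definition ex_MDerive0 (G : R -> mat2) : Prop :=
  ex_CDerive0 (fun t => a11 (G t)) /\ ex_CDerive0 (fun t => a12 (G t)) /\
  ex_CDerive0 (fun t => a21 (G t)) /\ ex_CDerive0 (fun t => a22 (G t)).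

Lemma mat2_eq a b c d a' b' c' d' :
  a = a' -> b = b' -> c = c' -> d = d' -> Mat2 a b c d = Mat2 a' b' c' d'.
Proof. intros; subst; reflexivity. Qed.

Lemma MDerive0_ext_loc (G H : R -> mat2) :
  locally 0 (fun t => G t = H t) -> MDerive0 G = MDerive0 H.
Proof.
  intros HGH; unfold MDerive0; f_equal; apply CDerive0_ext_loc;
    apply (filter_imp _ _ (fun t Ht => f_equal _ Ht) HGH).
Qed.

Lemma MDerive0_mmul (A B : R -> mat2) : ex_MDerive0 A -> ex_MDerive0 B ->
  MDerive0 (fun t => mmul (A t) (B t)) =
  madd (mmul (MDerive0 A) (B 0)) (mmul (A 0) (MDerive0 B)).
Proof.
  intros (A1 & A2 & A3 & A4) (B1 & B2 & B3 & B4).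
  cbv beta iota delta [MDerive0 mmul madd a11 a12 a21 a22].
  apply mat2_eq; rewrite CDerive0_plus, !CDerive0_mult;
    auto using ex_CDerive0_mult; ring.
Qed.

(* [fx (gauge r w) z] is [gauge_mat (r z) (fx w z) (mpdx r z)] by conversion. *)
Definition gauge_mat (r theta dr : mat2) : mat2 :=
  madd (mmul (mmul (minv r) theta) r) (mmul (minv r) dr).

Lemma mdet_mmul (A B : mat2) : mdet (mmul A B) = (mdet A * mdet B)%C.
Proof. destruct A, B; unfold mdet, mmul; simpl; ring. Qed.

Lemma gauge_mat_mmul (W R dW dR : mat2) : mdet W <> 0%C -> mdet R <> 0%C ->
  gauge_mat R (mmul (minv W) dW) dR =
  mmul (minv (mmul W R)) (madd (mmul dW R) (mmul W dR)).
Proof.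
  intros HW HR; pose proof (Cmult_neq_0 _ _ HW HR) as HWR; rewrite <- mdet_mmul in HWR.
  destruct W as [w11 w12 w21 w22], R as [r11 r12 r21 r22].
  cbv beta iota delta [gauge_mat mdet minv mmul madd mscal a11 a12 a21 a22] in *.
  apply mat2_eq; field; auto.
Qed.

(* The value of a matrix 1-form at z on the tangent vector v; by conversion
   [fx (pullback f w) z] is [mf_eval w (f z) (pdx f z)]. *)
Definition mf_eval (w : mform) (z v : C) : mat2 :=
  madd (mscal (RtoC (fst v)) (fx w z)) (mscal (RtoC (snd v)) (fy w z)).

Lemma Ahat_eval (lam : R) (w v : C) : 1 - lam * Cmod w ^ 2 <> 0 ->
  mf_eval (Ahat lam) w v =
  mscal (/ (1 - RtoC lam * (w * Cconj w)))%C
    (Mat2 (RtoC lam * (w * Cconj v - Cconj w * v) / 2)%C (RtoC lam * Cconj v)%C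
          v (RtoC lam * (Cconj w * v - w * Cconj v) / 2)%C).
Proof.
  rewrite Cmod2_alt; destruct w as [x y], v as [p q]; cbn [Re Im fst snd]; intros Hw.
  cbv beta iota delta [mf_eval Ahat mf_add mf_scal cf_tens Gamma_form e_form cf_scal
    cf_add cf_conj dz dzbar t0 tp tm t1 t2 madd mscal fx fy cx cy a11 a12 a21 a22].
  f_equal; apply injective_projections;
    cbv beta iota delta [Cplus Cminus Copp Cmult Cinv Cdiv Cconj Ci RtoC fst snd];
    rewrite ?Cmod2_alt; cbn [Re Im fst snd];
    field; (split; [contradict Hw; nra | exact Hw]).
Qed.

Lemma MC_sec_Ahat (lam : R) (g : R -> C) : ex_CDerive0 g -> inD lam (g 0) ->
  mmul (minv (sec lam (g 0))) (MDerive0 (fun t => sec lam (g t))) =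
  mf_eval (Ahat lam) (g 0) (CDerive0 g).
Proof.
  unfold inD; intros Hg Hg0.
  assert (Hu : ex_CDerive0 (fun t => RtoC (1 - lam * Cmod (g t) ^ 2)))
    by exact (ex_CDerive0_RtoC_sub_Cmod2 (fun _ => 1) lam g (ex_CDerive0_const _) Hg).
  pose proof (ex_CDerive0_RtoC_invsqrt (fun t => 1 - lam * Cmod (g t) ^ 2)
                (proj1 Hu) Hg0) as Hn.
  pose proof (CDerive0_RtoC_invsqrt (fun t => 1 - lam * Cmod (g t) ^ 2)
                (proj1 Hu) Hg0) as En.
  pose proof (CDerive0_RtoC_sub_Cmod2 (fun _ => 1) lam g (ex_CDerive0_const _) Hg) as Eu.
  cbv beta in Eu, Hn, En; rewrite Eu, CDerive0_const in En.
  rewrite Ahat_eval by lra.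
  cbv beta iota delta [MDerive0 sec mscal a11 a12 a21 a22].
  rewrite !CDerive0_mult, CDerive0_conj, !CDerive0_const, En;
    auto using ex_CDerive0_const, ex_CDerive0_mult, ex_CDerive0_conj.
  assert (Hn0 : RtoC (/ sqrt (1 - lam * Cmod (g 0) ^ 2)) <> 0%C)
    by apply RtoC_neq_0, Rgt_not_eq, Rinv_0_lt_compat, sqrt_lt_R0, Hg0.
  assert (HD : RtoC (1 - lam * Cmod (g 0) ^ 2) <> 0%C) by (apply RtoC_neq_0; lra).
  rewrite RtoC_minus, RtoC_mult, Cmod2_conj in HD |- *.
  clear Hu Hn En Eu.
  set (n0 := RtoC (/ sqrt (1 - lam * Cmod (g 0) ^ 2))) in *; clearbody n0.
  assert (Hdet : (n0 * n0 - n0 * (RtoC lam * Cconj (g 0)) * (n0 * g 0))%C <> 0%C).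
  { replace (n0 * n0 - n0 * (RtoC lam * Cconj (g 0)) * (n0 * g 0))%C
      with (n0 * n0 * (1 - RtoC lam * (g 0 * Cconj (g 0))))%C by ring.
    repeat apply Cmult_neq_0; assumption. }
  cbv beta iota delta [mmul minv mdet mscal a11 a12 a21 a22].
  apply mat2_eq; field; split; assumption.
Qed.

Lemma inH_sec (lam0 : R) (w : C) : inD lam0 w -> inH lam0 (sec lam0 w).
Proof.
  unfold inD, inH, sec, mscal; cbn [a11 a12 a21 a22]; intros Hw.
  assert (Hn : (/ sqrt (1 - lam0 * Cmod w ^ 2)) ^ 2 * (1 - lam0 * Cmod w ^ 2) = 1)
    by (rewrite pow_inv, pow2_sqrt by lra; field; lra).
  generalize dependent (/ sqrt (1 - lam0 * Cmod w ^ 2)); intros n Hn.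
  split; [|split].
  - destruct w; apply injective_projections; simpl; ring.
  - apply injective_projections; simpl; ring.
  - rewrite !Cmod_mult, Cmod_R, Cmod_1, <- !RtoC_pow, <- RtoC_mult, <- RtoC_minus.
    f_equal; rewrite <- (pow2_abs n) in Hn; nra.
Qed.

Lemma Cmod2_div_sub (lam : R) (a b : C) : a <> 0%C ->
  1 - lam * Cmod (b / a) ^ 2 = (Cmod a ^ 2 - lam * Cmod b ^ 2) / Cmod a ^ 2.
Proof.
  intros Ha; rewrite Cmod_div by exact Ha; apply Cmod_gt_0 in Ha; field; lra.
Qed.

Lemma inD_div (lam : R) (a b : C) : a <> 0%C ->
  lam * Cmod b ^ 2 < Cmod a ^ 2 -> inD lam (b / a).
Proof.
  intros Ha Hab; unfold inD; rewrite Cmod2_div_sub by exact Ha.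
  apply Rdiv_lt_0_compat; [lra | apply pow_lt, Cmod_gt_0, Ha].
Qed.

Lemma Umap_mul_rmat (lam : R) (F1 F2 : mat2 -> C) (s : C -> mat2) (w : C) :
  F1 (s w) <> 0%C -> lam * Cmod (F2 (s w)) ^ 2 < Cmod (F1 (s w)) ^ 2 ->
  mmul (Umap lam F1 F2 (s w)) (rmat (fun v => F1 (s v)) w) =
  sec lam (F2 (s w) / F1 (s w)).
Proof.
  unfold Umap, rmat, sec; generalize (F1 (s w)) (F2 (s w)); intros a b Ha Hab.
  set (q := sqrt (Cmod a ^ 2 - lam * Cmod b ^ 2)).
  set (m := Cmod a).
  assert (Hq : 0 < q) by (apply sqrt_lt_R0; lra).
  assert (Hm : 0 < m) by (apply Cmod_gt_0, Ha).
  assert (Hqm : 0 < q / m) by (apply Rdiv_lt_0_compat; assumption).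
  assert (Es : sqrt (1 - lam * Cmod (b / a) ^ 2) = q / m).
  { rewrite Cmod2_div_sub, <- (sqrt_pow2 (q / m)) by (auto; lra); fold m; f_equal.
    replace ((q / m) ^ 2) with (q ^ 2 / m ^ 2) by (field; lra).
    unfold q; rewrite pow2_sqrt by lra; reflexivity. }
  (* Eliminating [Cconj a] through [a * Cconj a = m ^ 2] lets [field] see the
     cancellations. *)
  assert (Ec : Cconj a = (RtoC m ^ 2 / a)%C)
    by (unfold m; rewrite <- RtoC_pow, Cmod2_conj; field; exact Ha).
  rewrite Es, Cdiv_conj, Ec, !RtoC_inv, RtoC_div by (auto; lra).
  cbv beta iota delta [mmul mscal a11 a12 a21 a22].
  apply mat2_eq; field; repeat split; auto; apply RtoC_neq_0; lra.
Qed.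

Lemma mdet_Umap (lam : R) (F1 F2 : mat2 -> C) (x : mat2) :
  lam * Cmod (F2 x) ^ 2 < Cmod (F1 x) ^ 2 -> mdet (Umap lam F1 F2 x) = 1%C.
Proof.
  unfold Umap, mdet, mscal; cbn [a11 a12 a21 a22].
  generalize (F1 x) (F2 x); intros a b Hab.
  transitivity (RtoC ((/ sqrt (Cmod a ^ 2 - lam * Cmod b ^ 2)) ^ 2 *
                      (Cmod a ^ 2 - lam * Cmod b ^ 2))).
  - rewrite RtoC_mult, RtoC_minus, RtoC_mult, !Cmod2_conj, RtoC_pow; ring.
  - rewrite pow_inv, pow2_sqrt by lra; f_equal; field; lra.
Qed.

Lemma mdet_rmat (g : C -> C) (w : C) : g w <> 0%C -> mdet (rmat g w) = 1%C.
Proof.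
  unfold rmat, mdet; cbn [a11 a12 a21 a22]; generalize (g w); intros a Ha.
  assert (Hm : RtoC (Cmod a) <> 0%C) by apply RtoC_neq_0, Rgt_not_eq, Cmod_gt_0, Ha.
  replace (Cconj a / Cmod a * (a / Cmod a) - 0 * 0)%C
    with (RtoC (Cmod a ^ 2) / (RtoC (Cmod a) * RtoC (Cmod a)))%C
    by (rewrite Cmod2_conj; field; exact Hm).
  rewrite RtoC_pow; field; exact Hm.
Qed.

Lemma ex_MDerive0_Umap (lam : R) (F1 F2 : mat2 -> C) (x : R -> mat2) :
  ex_CDerive0 (fun t => F1 (x t)) -> ex_CDerive0 (fun t => F2 (x t)) ->
  lam * Cmod (F2 (x 0)) ^ 2 < Cmod (F1 (x 0)) ^ 2 ->
  ex_MDerive0 (fun t => Umap lam F1 F2 (x t)).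
Proof.
  intros H1 H2 Hpos.
  assert (Hn : ex_CDerive0
    (fun t => RtoC (/ sqrt (Cmod (F1 (x t)) ^ 2 - lam * Cmod (F2 (x t)) ^ 2)))).
  { apply ex_CDerive0_RtoC_invsqrt; [|lra].
    apply ex_derive_of_RtoC, ex_CDerive0_RtoC_sub_Cmod2, H2.
    apply ex_CDerive0_Cmod2, H1. }
  cbv beta iota delta [ex_MDerive0 Umap mscal a11 a12 a21 a22].
  split; [|split; [|split]]; apply ex_CDerive0_mult; try assumption.
  - apply ex_CDerive0_mult; [apply ex_CDerive0_const | apply ex_CDerive0_conj, H2].
  - apply ex_CDerive0_conj, H1.
Qed.

Lemma ex_MDerive0_rmat (g : C -> C) (p : R -> C) :
  ex_CDerive0 (fun t => g (p t)) -> g (p 0) <> 0%C ->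
  ex_MDerive0 (fun t => rmat g (p t)).
Proof.
  intros Hg Hg0.
  assert (Hm : ex_CDerive0 (fun t => / RtoC (Cmod (g (p t))))%C).
  { apply (ex_CDerive0_inv (fun t => RtoC (Cmod (g (p t))))).
    - apply ex_CDerive0_RtoC_Cmod; assumption.
    - apply RtoC_neq_0, Rgt_not_eq, Cmod_gt_0, Hg0. }
  cbv beta iota delta [ex_MDerive0 rmat Cdiv a11 a12 a21 a22].
  split; [|split; [|split]];
    [| apply ex_CDerive0_const | apply ex_CDerive0_const |];
    apply ex_CDerive0_mult; try assumption; apply ex_CDerive0_conj, Hg.
Qed.

Lemma locally_inD_neq_0 (lam0 : R) (p h : R -> C) :
  ex_CDerive0 p -> inD lam0 (p 0) -> ex_CDerive0 h -> h 0 <> 0%C ->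
  locally 0 (fun t => inD lam0 (p t) /\ h t <> 0%C).
Proof.
  intros Hp Hp0 Hh Hh0; apply filter_and.
  - apply (ex_derive_locally_pos (fun t => 1 - lam0 * Cmod (p t) ^ 2)); [|exact Hp0].
    apply ex_derive_of_RtoC, (ex_CDerive0_RtoC_sub_Cmod2 (fun _ => 1)), Hp.
    apply ex_CDerive0_const.
  - apply (filter_imp (fun t => 0 < Cmod (h t) ^ 2)).
    + intros t Ht E; rewrite E, Cmod_0 in Ht; lra.
    + apply ex_derive_locally_pos.
      * apply ex_derive_of_RtoC, ex_CDerive0_Cmod2, Hh.
      * apply pow_lt, Cmod_gt_0, Hh0.
Qed.

Section BundleMap.
Variables (lam0 lam : R) (F1 F2 : mat2 -> C) (f : C -> C).
Hypothesis Hpos : forall h, inH lam0 h -> (Cmod (F1 h))^2 > lam * (Cmod (F2 h))^2.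
Hypothesis Hbundle : forall h, inH lam0 h -> a11 h <> 0%C ->
  a11 (Umap lam F1 F2 h) <> 0%C -> proj (Umap lam F1 F2 h) = f (proj h).

Lemma f_quotient (w : C) : inD lam0 w -> F1 (sec lam0 w) <> 0%C ->
  f w = (F2 (sec lam0 w) / F1 (sec lam0 w))%C.
Proof.
  intros Hw Hf1; pose proof (Hpos _ (inH_sec _ _ Hw)) as Hp.
  assert (Hn : RtoC (/ sqrt (1 - lam0 * Cmod w ^ 2)) <> 0%C)
    by (apply RtoC_neq_0, Rgt_not_eq, Rinv_0_lt_compat, sqrt_lt_R0; exact Hw).
  assert (HU : RtoC (/ sqrt (Cmod (F1 (sec lam0 w)) ^ 2 -
                             lam * Cmod (F2 (sec lam0 w)) ^ 2)) <> 0%C)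
    by (apply RtoC_neq_0, Rgt_not_eq, Rinv_0_lt_compat, sqrt_lt_R0; lra).
  assert (Hsec : proj (sec lam0 w) = w)
    by (unfold proj, sec, mscal; cbn [a11 a21]; field; exact Hn).
  rewrite <- Hsec at 1; rewrite <- Hbundle.
  - unfold proj, Umap, mscal; cbn [a11 a21]; field; split; assumption.
  - apply inH_sec, Hw.
  - unfold sec, mscal; cbn [a11]; rewrite Cmult_1_r; exact Hn.
  - unfold Umap, mscal; cbn [a11]; apply Cmult_neq_0; assumption.
Qed.

Lemma pullback_Ahat_along (p : R -> C) (z : C) :
  p 0 = z -> ex_CDerive0 p -> inD lam0 z -> F1 (sec lam0 z) <> 0%C ->
  real_diff (fun w => F1 (sec lam0 w)) z -> real_diff (fun w => F2 (sec lam0 w)) z ->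
  mf_eval (Ahat lam) (f z) (CDerive0 (fun t => f (p t))) =
  gauge_mat (rmat (fun w => F1 (sec lam0 w)) z)
    (mmul (minv (Umap lam F1 F2 (sec lam0 z)))
          (MDerive0 (fun t => Umap lam F1 F2 (sec lam0 (p t)))))
    (MDerive0 (fun t => rmat (fun w => F1 (sec lam0 w)) (p t))).
Proof.
  intros <- Hp Hz Hf1 HF1 HF2.
  pose proof (ex_CDerive0_comp _ p Hp HF1) as Hh; cbv beta in Hh.
  pose proof (ex_CDerive0_comp _ p Hp HF2) as Hk; cbv beta in Hk.
  assert (Hloc := locally_inD_neq_0 lam0 p _ Hp Hz Hh Hf1).
  assert (Hquot : locally 0 (fun t =>
            f (p t) = (F2 (sec lam0 (p t)) / F1 (sec lam0 (p t)))%C)).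
  { apply (filter_imp _ _ (fun t Ht => f_quotient _ (proj1 Ht) (proj2 Ht)) Hloc). }
  assert (Hfac : locally 0 (fun t : R =>
            mmul (Umap lam F1 F2 (sec lam0 (p t)))
                 (rmat (fun w => F1 (sec lam0 w)) (p t)) = sec lam (f (p t)))).
  { refine (filter_imp _ _ _ (filter_and _ _ Hloc Hquot)).
    intros t [[Ht Hft] ->].
    apply (Umap_mul_rmat lam F1 F2 (sec lam0) (p t)); [exact Hft | apply Hpos, inH_sec, Ht]. }
  assert (Hg : ex_CDerive0 (fun t => f (p t))).
  { apply (ex_CDerive0_ext_loc (fun t => F2 (sec lam0 (p t)) * / F1 (sec lam0 (p t)))%C).
    - apply (filter_imp _ _ (fun t Ht => eq_sym Ht) Hquot).
    - apply ex_CDerive0_mult, ex_CDerive0_inv; assumption. }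
  assert (Hpos0 := Hpos _ (inH_sec _ _ Hz)).
  rewrite <- (MC_sec_Ahat lam _ Hg).
  2: { rewrite (locally_singleton _ _ Hquot); apply inD_div; assumption. }
  rewrite <- (MDerive0_ext_loc _ _ Hfac), <- (locally_singleton _ _ Hfac).
  rewrite MDerive0_mmul.
  - symmetry; apply gauge_mat_mmul;
      [rewrite mdet_Umap | rewrite mdet_rmat]; try assumption;
      apply RtoC_neq_0, R1_neq_R0.
  - apply (ex_MDerive0_Umap lam F1 F2 (fun t => sec lam0 (p t))); assumption.
  - apply ex_MDerive0_rmat; assumption.
Qed.

End BundleMap.

Theorem corollary4p5 (lam0 lam : R)
  (Hlam0 : lam0 = -1 \/ lam0 = 0 \/ lam0 = 1)
  (Hlam : lam = -1 \/ lam = 0 \/ lam = 1)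
  (F1 F2 : mat2 -> C) (f : C -> C)
  (* |F1|^2 > lam |F2|^2 on H^1_{lam0} *)
  (Hpos : forall h, inH lam0 h -> (Cmod (F1 h))^2 > lam * (Cmod (F2 h))^2)
  (* U is a bundle map covering f : pi_lam o U = f o pi_lam0 (affine charts) *)
  (Hbundle : forall h, inH lam0 h -> a11 h <> 0%C ->
     a11 (Umap lam F1 F2 h) <> 0%C ->
     proj (Umap lam F1 F2 h) = f (proj h))
  (* regularity of U along the section s *)
  (HF1 : forall z, inD lam0 z -> real_diff (fun w => F1 (sec lam0 w)) z)
  (HF2 : forall z, inD lam0 z -> real_diff (fun w => F2 (sec lam0 w)) z)
  (* f is holomorphic (where it takes finite values) *)
  (Hf : forall z, inD lam0 z -> F1 (sec lam0 z) <> 0%C -> holo_at f z) :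
  let f1 := fun z => F1 (sec lam0 z) in
  forall z, inD lam0 z -> f1 z <> 0%C ->
    fx (pullback f (Ahat lam)) z = fx (gauge (rmat f1) (sA lam0 lam F1 F2)) z /\
    fy (pullback f (Ahat lam)) z = fy (gauge (rmat f1) (sA lam0 lam F1 F2)) z.
Proof.
  intros f1 z Hz Hf1; split.
  - apply (pullback_Ahat_along lam0 lam F1 F2 f Hpos Hbundle (fun t => (fst z + t, snd z)));
      auto.
    + rewrite Rplus_0_r; destruct z; reflexivity.
    + split; simpl; auto_derive; auto.
  - apply (pullback_Ahat_along lam0 lam F1 F2 f Hpos Hbundle (fun t => (fst z, snd z + t)));
      auto.
    + rewrite Rplus_0_r; destruct z; reflexivity.
    + split; simpl; auto_derive; auto.
Qed.
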